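(* Let $p>3$ be prime, $t\in\{1,3,p,3p\}$, and $1\le r\le 3p-1$ with $\gcd(r,3p)=1$. Then \[\mathsf{c}(V_{3p},a_{3p,r,t})=\begin{cases}\gcd(3p,t) & \text{if } r=1,\\ 3+\frac{3(p-1)}{|r|_p} & \text{if } 1\ne r\equiv1\pmod 3\text{ and } t\in\{3,3p\},\\ 1+\frac{p-1}{|r|_p} & \text{if } 1\ne r\equiv 1\pmod3,\ t\in\{1,p\},\ 3\nmid|r|_p,\\ 1+\frac{3(p-1)}{|r|_p} & \text{if } 1\ne r\equiv1\pmod 3,\ t\in\{1,p\},\ 3\mid|r|_p,\\ 2\gcd(p,t) & \text{if } r\equiv 2\pmod 3\text{ and } r\equiv1\pmod p,\\ 2+\frac{2(p-1)}{|r|_p} & \text{if } r\equiv2\pmod3,\ r\not\equiv1\pmod p,\ |r|_p\text{ odd},\\ 2+\frac{3(p-1)}{|r|_p} & \text{if } r\equiv 2\pmod 3,\ r\not\equiv 1\pmod p,\ |r|_p\text{ even}.\end{cases}\]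
   Context: $\mathrm{D}_{6p}=\langle u,v\mid u^{3p}=1=v^2,\ vuv=u^{-1}\rangle$. For integers $r,t$ with $\gcd(r,3p)=1$, $a_{3p,r,t}$ is the automorphism of $\mathrm{D}_{6p}$ with $u^i\mapsto u^{ri}$, $u^jv\mapsto u^{rj+t}v$. $V_{3p}:=\{u^iv:0\le i\le 3p-1\}$, and $\mathsf{c}(V_{3p},a)$ is the number of cycles (including fixed points) of the permutation induced by $a$ on $V_{3p}$. $|r|_p$ is the multiplicative order of $r$ modulo $p$. *)

From mathcomp Require Import all_boot.
Set Implicit Arguments. Unset Strict Implicit. Unset Printing Implicit Defensive.

(* Dihedral group D_{2n} = < u, v | u^n = 1 = v^2, v u v = u^-1 >.
   Every element is uniquely u^i (i in Z/n) or u^i v; we encode it as a pair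
   (i, b) : 'I_n * bool, with (i, false) = u^i and (i, true) = u^i v. *)
Definition dih (n : nat) := ('I_n * bool)%type.

(* reduction of k modulo n, as an element of 'I_n (the argument x only
   witnesses 0 < n). *)
Definition modI n (x : 'I_n) (k : nat) : 'I_n :=
  Ordinal (ltn_pmod k (leq_ltn_trans (leq0n x) (ltn_ord x))).

Definition aut (n r t : nat) (x : dih n) : dih n :=
  if x.2 then (modI x.1 (r * x.1 + t), true) else (modI x.1 (r * x.1), false).

Definition Vrefl (n : nat) : pred (dih n) := fun x => x.2.

(* c(V_n, a) : number of cycles (orbits, fixed points included) of the
   permutation induced by a on V_n. *)
Definition ncycles (n : nat) (a : dih n -> dih n) : nat := fcard a (@Vrefl n).

(* |r|_p : multiplicative order of r modulo p (least k > 0 with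
   r^k = 1 mod p; for r coprime to the prime p it is < p). *)
Definition ordmod (p r : nat) : nat :=
  find (fun k => (0 < k) && (r ^ k == 1 %[mod p])) (iota 0 p).

Arguments aut : clear implicits.
Arguments Vrefl : clear implicits.

From mathcomp Require Import all_boot ssralg zmodp ring.
Set Implicit Arguments. Unset Strict Implicit. Unset Printing Implicit Defensive.
Import GRing.Theory.

(* By the Chinese remainder theorem, u^i v |-> (i mod 3, i mod p) identifies
   V_{3p} with F_3 x F_p, and a_{3p,r,t} acts there as the product of the two
   affine maps y |-> r y + t.  An affine map y |-> rho y + tau of F_q is a
   translation when rho = 1, so all its orbits have length 1 or q; otherwise it
   fixes tau / (1 - rho) and every other orbit has length the order of rho.
   A point of the product has orbit length the lcm of the orbit lengths of its
   coordinates, so cutting each factor into these pieces of uniform period and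
   dividing the size of each product piece by its lcm period counts the cycles. *)

Section UniformPeriod.
Variables (T : finType) (f : T -> T).
Hypothesis f_inj : injective f.

Lemma dvdn_order x k : (order f x %| k) = (iter k f x == x).
Proof.
have iter_mul_order q : iter (q * order f x) f x = x.
  by elim: q => // q IHq; rewrite mulSn iterD IHq (iter_order f_inj).
rewrite {2}(divn_eq k (order f x)) addnC iterD iter_mul_order /dvdn.
case: (k %% order f x) (ltn_pmod k (order_gt0 f x)) => [|s] ltso.
  by rewrite !eqxx.
apply/esym/negbTE/eqP => iter_s.
by have := findex_iter ltso; rewrite iter_s findex0.
Qed.

Lemma fcard_uniform_period (a : {pred T}) L :
    fclosed f a -> {in a, forall x k, (iter k f x == x) = (L %| k)} ->
  fcard f a = #|a| %/ L.
Proof.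
move=> cl_a per_a.
have order_a : {in a, forall x, order f x = L}.
  move=> x ax; apply/eqP.
  by rewrite eqn_dvd dvdn_order -(per_a x ax) (iter_order f_inj) eqxx andbT per_a.
have [L0 | L_gt0] := posnP L.
  have a0 : a =i pred0.
    by move=> x; apply/idP => ax; have := order_gt0 f x; rewrite order_a ?L0.
  by rewrite L0 divn0 (eq_n_comp_r a0); apply: eq_card0 => x; rewrite !inE andbF.
rewrite -(fcard_order_set f_inj (n := L) _ cl_a) ?mulnK //.
by apply/subsetP => x ax; rewrite inE order_a.
Qed.
End UniformPeriod.

Lemma n_compID (T : finType) (e : rel T) (a b : {pred T}) :
  n_comp e a = n_comp e [predI a & b] + n_comp e [predI a & [predC b]].
Proof.
rewrite /n_comp_mem -(cardID b); congr (_ + _); apply: eq_card => x.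
  by rewrite !inE andbA.
by rewrite !inE andbC andbA.
Qed.

Lemma lcmn_coprime m n : coprime m n -> lcmn m n = m * n.
Proof. by move=> /eqP mn1; rewrite -muln_lcm_gcd mn1 muln1. Qed.

Lemma eq1_mod_coprime m1 m2 r : coprime m1 m2 -> 1 < m1 -> 1 < m2 -> r < m1 * m2 ->
  (r == 1) = (r %% m1 == 1) && (r %% m2 == 1).
Proof.
move=> m12 m1_gt1 m2_gt1 r_lt.
rewrite -{2}(modn_small m1_gt1) -{3}(modn_small m2_gt1) -chinese_remainder //.
by rewrite !modn_small // (leq_trans m1_gt1) // leq_pmulr // ltnW.
Qed.

Section OrderMod.
Variables q r w : nat.
Hypotheses (w_gt0 : 0 < w) (w_lt_q : w < q) (rw_eq1 : r ^ w = 1 %[mod q]).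

Let P k := (0 < k) && (r ^ k == 1 %[mod q]).

Let has_P : has P (iota 0 q).
Proof. by apply/hasP; exists w; rewrite ?mem_iota //= /P w_gt0 rw_eq1 /=. Qed.

Let ordmod_lt : ordmod q r < q.
Proof. by rewrite -[q in _ < q](size_iota 0) -has_find. Qed.

Let P_ordmod : P (ordmod q r).
Proof. by have := nth_find 0 has_P; rewrite nth_iota. Qed.

Lemma ordmod_gt0 : 0 < ordmod q r.
Proof. by case/andP: P_ordmod. Qed.

Lemma ordmod_dvdn k : (ordmod q r %| k) = (r ^ k == 1 %[mod q]).
Proof.
set o := ordmod q r; have /andP[_ /eqP ro_eq1] := P_ordmod.
have -> : r ^ k = r ^ (k %% o) %[mod q].
  rewrite {1}(divn_eq k o) expnD [_ * o]mulnC expnM -modnMml -modnXm ro_eq1 modnXm.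
  by rewrite exp1n modnMml mul1n.
rewrite /dvdn; case: (k %% o) (ltn_pmod k ordmod_gt0) => [|s] lt_so.
  by rewrite !eqxx.
by have := before_find 0 lt_so; rewrite nth_iota ?(ltn_trans lt_so).
Qed.
End OrderMod.

Lemma expn_pred_prime_mod q r : prime q -> ~~ (q %| r) -> r ^ q.-1 = 1 %[mod q].
Proof.
move=> q_pr q_r; have r_gt0 : 0 < r by case: r q_r; rewrite ?dvdn0.
have q_gt0 := prime_gt0 q_pr.
apply/eqP; rewrite eqn_mod_dvd ?expn_gt0 ?r_gt0 //.
rewrite -(@Gauss_dvdr q r) ?prime_coprime // mulnBr muln1 -expnS prednK //.
by rewrite -eqn_mod_dvd ?fermat_little // -{1}(expn1 r) leq_pexp2l.
Qed.

Section OrderModPrime.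
Variables q r : nat.
Hypotheses (q_pr : prime q) (q_r : ~~ (q %| r)).

Let pred_q_gt0 : 0 < q.-1. Proof. by rewrite -ltnS prednK ?prime_gt1 ?prime_gt0. Qed.
Let pred_q_lt : q.-1 < q. Proof. by rewrite prednK ?prime_gt0. Qed.
Let fermat := expn_pred_prime_mod q_pr q_r.

Lemma ordmod_prime_gt0 : 0 < ordmod q r.
Proof. exact: ordmod_gt0 pred_q_gt0 pred_q_lt fermat. Qed.

Lemma ordmod_prime_dvdn k : (ordmod q r %| k) = (r ^ k == 1 %[mod q]).
Proof. exact: (ordmod_dvdn pred_q_gt0 pred_q_lt fermat k). Qed.

Lemma ordmod_dvd_pred : ordmod q r %| q.-1.
Proof. by rewrite ordmod_prime_dvdn fermat. Qed.
End OrderModPrime.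

Section Affine.
Local Open Scope ring_scope.
Variable K : fieldType.
Implicit Types rho tau y : K.

Definition affine rho tau y := rho * y + tau.

Definition affine_fix rho tau := tau / (1 - rho).

Lemma affine_fixP rho tau : rho != 1 ->
  affine rho tau (affine_fix rho tau) = affine_fix rho tau.
Proof.
move=> rho_neq1; have rho1_neq0 : 1 - rho != 0 by rewrite subr_eq0 eq_sym.
rewrite /affine /affine_fix; apply: (mulIf rho1_neq0).
by rewrite mulrDl -mulrA divfK //; ring.
Qed.

Lemma iter_affine_eq rho tau y k : rho != 1 ->
  (iter k (affine rho tau) y == y) = (y == affine_fix rho tau) || (rho ^+ k == 1).
Proof.
move=> rho_neq1; have := affine_fixP tau rho_neq1.
set z := affine_fix rho tau => zP.
have iterE : iter k (affine rho tau) y - z = rho ^+ k * (y - z).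
  elim: k => [|k IHk] /=; first by rewrite mul1r.
  by rewrite exprS -mulrA -IHk -[X in _ - X = _]zP /affine; ring.
rewrite -subr_eq0 (_ : _ - y = (rho ^+ k - 1) * (y - z)).
  by rewrite mulf_eq0 !subr_eq0 orbC.
by rewrite mulrBl -iterE; ring.
Qed.

Lemma affine_eq_fix rho tau y : rho != 0 -> rho != 1 ->
  (affine rho tau y == affine_fix rho tau) = (y == affine_fix rho tau).
Proof.
move=> rho_neq0 rho_neq1; rewrite -{1}(affine_fixP tau rho_neq1).
by rewrite (inj_eq (addIr tau)) (inj_eq (mulfI rho_neq0)).
Qed.

Lemma iter_affine1_eq tau y k :
  (iter k (affine 1 tau) y == y) = (tau == 0) || (k%:R == 0 :> K).
Proof.
have -> : iter k (affine 1 tau) y = y + tau *+ k.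
  elim: k => [|k IHk] /=; first by rewrite addr0.
  by rewrite IHk /affine mulrS; ring.
by rewrite -[X in _ == X]addr0 (inj_eq (addrI y)) -(mulr_natr tau k) mulf_eq0.
Qed.
End Affine.

Definition uniform_period (T : eqType) (g : T -> T) (S : pred T) (L : nat) :=
  {mono g : x / S x} /\ {in S, forall x k, (iter k g x == x) = (L %| k)}.

Definition Fp_affine (q r t : nat) : 'F_q -> 'F_q := affine r%:R t%:R.

Definition Fp_affine_fix (q r t : nat) : 'F_q := affine_fix r%:R t%:R.

Arguments Fp_affine : clear implicits.
Arguments Fp_affine_fix : clear implicits.

Section PrimeFieldAffine.
Variables q r t : nat.
Hypothesis q_pr : prime q.

Lemma Fp_nat_eq m k : ((m%:R : 'F_q) == k%:R)%R = (m == k %[mod q]).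
Proof. by rewrite -(inj_eq val_inj) /= !val_Fp_nat. Qed.

Lemma Fp_nat_eq0 m : ((m%:R : 'F_q) == 0)%R = (q %| m).
Proof. by rewrite -(mulr0n 1) Fp_nat_eq // mod0n. Qed.

Lemma Fp_nat_eq1 m : ((m%:R : 'F_q) == 1)%R = (m %% q == 1).
Proof. by rewrite -(mulr1n 1) Fp_nat_eq // (modn_small (prime_gt1 q_pr)). Qed.

Lemma Fp_affine_period_translation : r %% q = 1 ->
  uniform_period (Fp_affine q r t) predT (if q %| t then 1 else q).
Proof.
move=> rq1; have -> : Fp_affine q r t = (affine 1 t%:R)%R.
  by rewrite /Fp_affine -Fp_nat_mod // rq1.
split=> // y _ k; rewrite iter_affine1_eq !Fp_nat_eq0.
by case: (q %| t); rewrite ?dvd1n.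
Qed.

Hypotheses (q_r : ~~ (q %| r)) (rq_neq1 : r %% q != 1).
Let r_neq0 : (r%:R != 0 :> 'F_q)%R. Proof. by rewrite Fp_nat_eq0. Qed.
Let r_neq1 : (r%:R != 1 :> 'F_q)%R. Proof. by rewrite Fp_nat_eq1. Qed.

Lemma Fp_affine_period_fix :
  uniform_period (Fp_affine q r t) (pred1 (Fp_affine_fix q r t)) 1.
Proof.
split=> [y | y /eqP-> k]; first exact: affine_eq_fix.
by rewrite iter_affine_eq // eqxx dvd1n.
Qed.

Lemma Fp_affine_period_moved :
  uniform_period (Fp_affine q r t) (predC1 (Fp_affine_fix q r t)) (ordmod q r).
Proof.
split=> [y | y /negbTE y_neq k]; first by rewrite /= affine_eq_fix.
rewrite iter_affine_eq // y_neq -natrX Fp_nat_eq1 ordmod_prime_dvdn //.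
by rewrite (modn_small (prime_gt1 q_pr)).
Qed.
End PrimeFieldAffine.

Definition dih_coord (q n : nat) (x : dih n) : 'F_q := (x.1 : nat)%:R%R.
Arguments dih_coord q {n}.

Definition refl_piece (n q1 q2 : nat) (S1 : pred 'F_q1) (S2 : pred 'F_q2) :
    pred (dih n) :=
  [pred x | [&& x.2, S1 (dih_coord q1 x) & S2 (dih_coord q2 x)]].

Arguments refl_piece : clear implicits.

Lemma aut_snd n r t (x : dih n) : (aut n r t x).2 = x.2.
Proof. by rewrite /aut; case: x.2. Qed.

Lemma iter_aut_snd n r t (x : dih n) k : (iter k (aut n r t) x).2 = x.2.
Proof. by elim: k => //= k IHk; rewrite aut_snd. Qed.

Lemma dih_coord_aut n r t q (x : dih n) : prime q -> q %| n ->
  dih_coord q (aut n r t x) = (r%:R * dih_coord q x + (if x.2 then t%:R else 0))%R.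
Proof.
move=> q_pr q_n; rewrite /aut /dih_coord.
by case: x.2; rewrite /= -Fp_nat_mod // modn_dvdm // Fp_nat_mod // ?natrD natrM ?addr0.
Qed.

Lemma dih_coord_aut_refl n r t q (x : dih n) : prime q -> q %| n -> x.2 ->
  dih_coord q (aut n r t x) = Fp_affine q r t (dih_coord q x).
Proof. by move=> q_pr q_n x2; rewrite dih_coord_aut // x2. Qed.

Lemma dih_coord_iter_aut n r t q (x : dih n) k : prime q -> q %| n -> x.2 ->
  dih_coord q (iter k (aut n r t) x) = iter k (Fp_affine q r t) (dih_coord q x).
Proof.
move=> q_pr q_n x2; elim: k => //= k IHk.
by rewrite dih_coord_aut_refl ?iter_aut_snd // IHk.
Qed.

Section CoprimeModuli.
Variables q1 q2 r t : nat.
Hypotheses (q1_pr : prime q1) (q2_pr : prime q2) (q12 : coprime q1 q2).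
Hypothesis r_coprime : coprime r (q1 * q2).
Local Notation n := (q1 * q2).
Local Notation f := (aut n r t).
Local Notation piece := (refl_piece n q1 q2).

Let q1_n : q1 %| n. Proof. exact: dvdn_mulr. Qed.
Let q2_n : q2 %| n. Proof. exact: dvdn_mull. Qed.
Let n_gt0 : 0 < n. Proof. by rewrite muln_gt0 !prime_gt0. Qed.

Lemma dih_coord_inj (x y : dih n) : x.2 = y.2 ->
  dih_coord q1 x = dih_coord q1 y -> dih_coord q2 x = dih_coord q2 y -> x = y.
Proof.
case: x y => [i b] [j c] /= <- /eqP eq1 /eqP eq2.
rewrite Fp_nat_eq // in eq1; rewrite Fp_nat_eq // in eq2.
have : i == j %[mod n] by rewrite chinese_remainder // eq1 eq2.
by rewrite !modn_small // => /eqP/val_inj->.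
Qed.

Lemma aut_inj : injective f.
Proof.
have r_neq0 q : prime q -> q %| n -> (r%:R != 0 :> 'F_q)%R.
  move=> q_pr q_n; rewrite Fp_nat_eq0 // -prime_coprime // coprime_sym.
  exact: coprime_dvdr q_n r_coprime.
move=> x y fxy; have x2y2 : x.2 = y.2 by rewrite -(aut_snd r t x) fxy aut_snd.
apply: dih_coord_inj => //.
  move/(congr1 (dih_coord q1)): fxy; rewrite !dih_coord_aut // x2y2.
  by move/addIr; apply: mulfI; apply: r_neq0.
move/(congr1 (dih_coord q2)): fxy; rewrite !dih_coord_aut // x2y2.
by move/addIr; apply: mulfI; apply: r_neq0.
Qed.

Lemma iter_aut_refl_eq (x : dih n) k : x.2 ->
  (iter k f x == x) =
    (iter k (Fp_affine q1 r t) (dih_coord q1 x) == dih_coord q1 x)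
    && (iter k (Fp_affine q2 r t) (dih_coord q2 x) == dih_coord q2 x).
Proof.
move=> x2; rewrite -!dih_coord_iter_aut //.
apply/eqP/andP => [-> // | [/eqP eq1 /eqP eq2]].
by apply: dih_coord_inj; rewrite ?iter_aut_snd.
Qed.

Definition crt_refl (a : 'F_q1) (b : 'F_q2) : dih n :=
  (Ordinal (ltn_pmod (chinese q1 q2 a b) n_gt0), true).

Lemma dih_coord_crt_refl1 a b : dih_coord q1 (crt_refl a b) = a.
Proof.
rewrite /dih_coord /= -(Fp_nat_mod q1_pr) modn_dvdm // (chinese_modl q12).
by rewrite Fp_nat_mod //; apply: natr_Zp.
Qed.

Lemma dih_coord_crt_refl2 a b : dih_coord q2 (crt_refl a b) = b.
Proof.
rewrite /dih_coord /= -(Fp_nat_mod q2_pr) modn_dvdm // (chinese_modr q12).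
by rewrite Fp_nat_mod //; apply: natr_Zp.
Qed.

Lemma card_refl_piece (S1 : pred 'F_q1) (S2 : pred 'F_q2) :
  #|piece S1 S2| = #|S1| * #|S2|.
Proof.
have crt_inj : injective (fun u => crt_refl u.1 u.2).
  move=> [a b] [a' b'] /= eq_ab; congr (_, _).
    by have := congr1 (dih_coord q1) eq_ab; rewrite !dih_coord_crt_refl1.
  by have := congr1 (dih_coord q2) eq_ab; rewrite !dih_coord_crt_refl2.
rewrite -cardX -(card_image crt_inj); apply: eq_card => x.
apply/idP/imageP => [/and3P[x2 S1x S2x] | [[a b] /andP[S1a S2b] ->]].
  exists (dih_coord q1 x, dih_coord q2 x); first exact/andP.
  by apply: dih_coord_inj; rewrite ?dih_coord_crt_refl1 ?dih_coord_crt_refl2.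
by apply/and3P; rewrite dih_coord_crt_refl1 dih_coord_crt_refl2.
Qed.

Lemma fcard_refl_piece (S1 : pred 'F_q1) (S2 : pred 'F_q2) L1 L2 :
    uniform_period (Fp_affine q1 r t) S1 L1 -> uniform_period (Fp_affine q2 r t) S2 L2 ->
  fcard f (piece S1 S2) = #|S1| * #|S2| %/ lcmn L1 L2.
Proof.
move=> [S1_mono per1] [S2_mono per2].
rewrite -card_refl_piece; apply: (fcard_uniform_period aut_inj).
  move=> x y /eqP <-; rewrite !inE aut_snd.
  by case x2: x.2; rewrite //= !dih_coord_aut_refl // S1_mono S2_mono.
move=> x /and3P[x2 S1x S2x] k.
by rewrite iter_aut_refl_eq // per1 // per2 // dvdn_lcm.
Qed.

Lemma fcard_refl_piece_split1 (z : 'F_q1) (S2 : pred 'F_q2) :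
  fcard f (piece predT S2) = fcard f (piece (pred1 z) S2) + fcard f (piece (predC1 z) S2).
Proof.
rewrite (n_compID _ _ [pred x | dih_coord q1 x == z]).
by congr (_ + _); apply: eq_n_comp_r => x; rewrite !inE /= -andbA (andbC (S2 _)).
Qed.

Lemma fcard_refl_piece_split2 (z : 'F_q2) (S1 : pred 'F_q1) :
  fcard f (piece S1 predT) = fcard f (piece S1 (pred1 z)) + fcard f (piece S1 (predC1 z)).
Proof.
rewrite (n_compID _ _ [pred x | dih_coord q2 x == z]).
by congr (_ + _); apply: eq_n_comp_r => x; rewrite !inE /= andbT -andbA.
Qed.

Lemma ncycles_refl_piece : ncycles f = fcard f (piece predT predT).
Proof. by apply: eq_n_comp_r => x; rewrite !inE /= !andbT. Qed.
End CoprimeModuli.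

Lemma card_predT_Fp q : prime q -> #|(predT : pred 'F_q)| = q.
Proof. by move=> q_pr; rewrite -[RHS](card_Fp q_pr); apply: eq_card. Qed.

Lemma card_predC1_Fp q (z : 'F_q) : prime q -> #|predC1 z| = q.-1.
Proof. by move=> q_pr; rewrite cardC1 card_Fp. Qed.

Lemma ordmod3_eq2 r : r %% 3 = 2 -> ordmod 3 r = 2.
Proof. by move=> r3; rewrite /ordmod /= -!(modnXm _ 3 r) r3. Qed.

Section DihedralThreeP.
Variables p r t : nat.
Hypotheses (p_pr : prime p) (p_gt3 : 3 < p) (r_coprime : coprime r (3 * p)).
Local Notation f := (aut (3 * p) r t).
Local Notation piece := (refl_piece (3 * p) 3 p).
Local Notation o := (ordmod p r).

Let coprime3p : coprime 3 p.
Proof. by rewrite prime_coprime // dvdn_prime2 // ltn_eqF. Qed.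
Let p_ndvd3 : ~~ (p %| 3). Proof. by rewrite -prime_coprime // coprime_sym. Qed.
Let three_ndvd_p : ~~ (3 %| p). Proof. by rewrite -prime_coprime. Qed.
Let three_ndvd_r : ~~ (3 %| r).
Proof.
by rewrite -prime_coprime // coprime_sym (coprime_dvdr _ r_coprime) ?dvdn_mulr.
Qed.
Let p_ndvd_r : ~~ (p %| r).
Proof.
by rewrite -prime_coprime // coprime_sym (coprime_dvdr _ r_coprime) ?dvdn_mull.
Qed.
Let p_gt0 : 0 < p. Proof. exact: prime_gt0. Qed.
Let o_gt0 : 0 < o. Proof. exact: ordmod_prime_gt0. Qed.
Let p_odd : odd p.
Proof. by case: (even_prime p_pr) p_gt3 => [->|]. Qed.
Let o_dvd : o %| p.-1. Proof. exact: ordmod_dvd_pred. Qed.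
Let fcard_piece := fcard_refl_piece (t := t) (isT : prime 3) p_pr coprime3p r_coprime.

Lemma ncycles_mod1 : r %% 3 = 1 -> r %% p = 1 -> t \in [:: 1; 3; p; 3 * p] ->
  ncycles f = gcdn (3 * p) t.
Proof.
move=> r3 rp t_in; rewrite ncycles_refl_piece.
have per3 := Fp_affine_period_translation t (isT : prime 3) r3.
rewrite (fcard_piece per3 (Fp_affine_period_translation t p_pr rp)).
rewrite !card_predT_Fp //; move: t_in; rewrite !inE => /or4P[] /eqP->.
- by rewrite !dvdn1 (gtn_eqF (prime_gt1 p_pr)) lcmn_coprime // divnn muln_gt0 p_gt0 gcdn1.
- by rewrite dvdnn (negbTE p_ndvd3) lcm1n mulnK // gcdnC gcdnMr.
- by rewrite dvdnn (negbTE three_ndvd_p) lcmn1 mulKn // gcdnC gcdnMl.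
- by rewrite dvdn_mulr // dvdn_mull // lcmn1 divn1 gcdnn.
Qed.

Let periods_p (rp : r %% p != 1) :=
  (Fp_affine_period_fix t p_pr p_ndvd_r rp, Fp_affine_period_moved t p_pr p_ndvd_r rp).

Lemma ncycles_mod3_1 : r %% 3 = 1 -> r %% p != 1 ->
  let L3 := if 3 %| t then 1 else 3 in ncycles f = 3 %/ L3 + 3 * p.-1 %/ lcmn L3 o.
Proof.
move=> r3 rp L3; have [fixp movedp] := periods_p rp.
have per3 : uniform_period (Fp_affine 3 r t) predT L3.
  exact: Fp_affine_period_translation.
rewrite ncycles_refl_piece (fcard_refl_piece_split2 r t (Fp_affine_fix p r t)).
rewrite (fcard_piece per3 fixp) (fcard_piece per3 movedp).
by rewrite card_predT_Fp // card1 card_predC1_Fp // lcmn1 muln1.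
Qed.

Lemma ncycles_mod3_1_dvd3t : r %% 3 = 1 -> r %% p != 1 -> t \in [:: 3; 3 * p] ->
  ncycles f = 3 + 3 * (p - 1) %/ o.
Proof.
move=> r3 rp t_in; have t3 : 3 %| t.
  by move: t_in; rewrite !inE => /orP[] /eqP->; rewrite ?dvdn_mulr.
by rewrite ncycles_mod3_1 //= t3 lcm1n divn1 subn1.
Qed.

Let three_ndvd_t : t \in [:: 1; p] -> ~~ (3 %| t).
Proof. by rewrite !inE => /orP[] /eqP->. Qed.

Lemma ncycles_mod3_1_coprime3o : r %% 3 = 1 -> r %% p != 1 -> t \in [:: 1; p] ->
  ~~ (3 %| o) -> ncycles f = 1 + (p - 1) %/ o.
Proof.
move=> r3 rp /three_ndvd_t t3 o3; rewrite ncycles_mod3_1 //= (negbTE t3).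
by rewrite lcmn_coprime ?prime_coprime // divnMl // subn1.
Qed.

Lemma ncycles_mod3_1_dvd3o : r %% 3 = 1 -> r %% p != 1 -> t \in [:: 1; p] ->
  3 %| o -> ncycles f = 1 + 3 * (p - 1) %/ o.
Proof.
move=> r3 rp /three_ndvd_t t3 o3.
by rewrite ncycles_mod3_1 //= (negbTE t3) (lcmn_idPr o3) subn1.
Qed.

Let periods_3 : r %% 3 = 2 ->
  uniform_period (Fp_affine 3 r t) (pred1 (Fp_affine_fix 3 r t)) 1
  * uniform_period (Fp_affine 3 r t) (predC1 (Fp_affine_fix 3 r t)) 2.
Proof.
move=> r3; have r3_neq1 : r %% 3 != 1 by rewrite r3.
split; first exact: Fp_affine_period_fix.
have := Fp_affine_period_moved t (isT : prime 3) three_ndvd_r r3_neq1.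
by rewrite ordmod3_eq2.
Qed.

Lemma ncycles_mod3_2_modp1 : r %% 3 = 2 -> r %% p = 1 -> ncycles f = 2 * gcdn p t.
Proof.
move=> r3 rp; have [fix3 moved3] := periods_3 r3.
have perp := Fp_affine_period_translation t p_pr rp.
rewrite ncycles_refl_piece (fcard_refl_piece_split1 r t (Fp_affine_fix 3 r t)).
rewrite (fcard_piece fix3 perp) (fcard_piece moved3 perp).
rewrite card1 card_predC1_Fp // card_predT_Fp // lcm1n /=.
have [pt | pt] := boolP (p %| t).
  by rewrite divn1 lcmn1 mulKn // mul1n (gcdn_idPl pt) addnn -mul2n.
have /eqP-> : coprime p t by rewrite prime_coprime.
by rewrite mul1n lcmn_coprime ?coprime2n // !divnn muln_gt0 p_gt0.
Qed.

Lemma ncycles_mod3_2 : r %% 3 = 2 -> r %% p != 1 ->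
  ncycles f = 2 + (p.-1 %/ o + 2 * p.-1 %/ lcmn 2 o).
Proof.
move=> r3 rp; have [fix3 moved3] := periods_3 r3; have [fixp movedp] := periods_p rp.
rewrite ncycles_refl_piece (fcard_refl_piece_split1 r t (Fp_affine_fix 3 r t)).
rewrite !(fcard_refl_piece_split2 r t (Fp_affine_fix p r t)).
rewrite (fcard_piece fix3 fixp) (fcard_piece fix3 movedp).
rewrite (fcard_piece moved3 fixp) (fcard_piece moved3 movedp).
rewrite !card1 !card_predC1_Fp // !lcm1n lcmn1 !muln1 mul1n divn1 /=.
by rewrite addnACA.
Qed.

Lemma ncycles_mod3_2_odd : r %% 3 = 2 -> r %% p != 1 -> odd o ->
  ncycles f = 2 + 2 * (p - 1) %/ o.
Proof.
move=> r3 rp o_odd; rewrite ncycles_mod3_2 // lcmn_coprime ?coprime2n // divnMl //.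
by rewrite -divnDl // addnn -mul2n subn1.
Qed.

Lemma ncycles_mod3_2_even : r %% 3 = 2 -> r %% p != 1 -> ~~ odd o ->
  ncycles f = 2 + 3 * (p - 1) %/ o.
Proof.
move=> r3 rp o_even; have o2 : 2 %| o by rewrite dvdn2.
by rewrite ncycles_mod3_2 // (lcmn_idPr o2) -divnDl // -mulSn subn1.
Qed.
End DihedralThreeP.

Theorem lemma5p10 (p t r : nat) :
  prime p -> 3 < p ->
  t \in [:: 1; 3; p; 3 * p] ->
  1 <= r <= 3 * p - 1 -> coprime r (3 * p) ->
  let c := ncycles (aut (3 * p) r t) in
  let o := ordmod p r in
  (r = 1 -> c = gcdn (3 * p) t)
  /\ (r != 1 -> r %% 3 = 1 -> t \in [:: 3; 3 * p] ->
        c = 3 + (3 * (p - 1)) %/ o)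
  /\ (r != 1 -> r %% 3 = 1 -> t \in [:: 1; p] -> ~~ (3 %| o) ->
        c = 1 + (p - 1) %/ o)
  /\ (r != 1 -> r %% 3 = 1 -> t \in [:: 1; p] -> 3 %| o ->
        c = 1 + (3 * (p - 1)) %/ o)
  /\ (r %% 3 = 2 -> r %% p = 1 -> c = 2 * gcdn p t)
  /\ (r %% 3 = 2 -> r %% p != 1 -> odd o -> c = 2 + (2 * (p - 1)) %/ o)
  /\ (r %% 3 = 2 -> r %% p != 1 -> ~~ odd o -> c = 2 + (3 * (p - 1)) %/ o).
Proof.
move=> p_pr p_gt3 t_in /andP[_ r_le] r_cop c o; rewrite {}/c {}/o.
have r1E : (r == 1) = (r %% 3 == 1) && (r %% p == 1).
  apply: eq1_mod_coprime; rewrite ?prime_gt1 //.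
    by rewrite prime_coprime // dvdn_prime2 // ltn_eqF.
  by apply: leq_ltn_trans r_le _; rewrite subn1 ltn_predL muln_gt0 (prime_gt0 p_pr).
have rp_neq1 : r != 1 -> r %% 3 = 1 -> r %% p != 1.
  by move=> rn1 r3; apply: contra rn1 => rp; rewrite r1E r3 rp.
split=> [r1 | ].
  have /andP[/eqP r3 /eqP rp] : (r %% 3 == 1) && (r %% p == 1) by rewrite -r1E r1.
  exact: ncycles_mod1.
split=> [rn1 r3 | ]; first exact: ncycles_mod3_1_dvd3t (rp_neq1 rn1 r3).
split=> [rn1 r3 | ]; first exact: ncycles_mod3_1_coprime3o (rp_neq1 rn1 r3).
split=> [rn1 r3 | ]; first exact: ncycles_mod3_1_dvd3o (rp_neq1 rn1 r3).
split; first exact: ncycles_mod3_2_modp1.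
by split; [exact: ncycles_mod3_2_odd | exact: ncycles_mod3_2_even].
Qed.
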